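(* The number of IP-SEG graphs on the labeled vertex set $\{1,\dots,n\}$ is at most $2^{O(n\log n)}$; more precisely, each IP-SEG graph on $n$ vertices can be encoded by assigning $O(\log n)$ bits to each vertex such that adjacency of two vertices is determined by their two labels alone (an implicit representation).
   Context: Let $L_1$ and $L_2$ be two distinct parallel horizontal lines in the plane. A closed straight line segment is an interval segment if both of its endpoints lie on the same line $L_i$, and a permutation segment if one endpoint lies on $L_1$ and the other on $L_2$. An IP-SEG model is a finite family of interval and permutation segments; its intersection graph has one vertex per segment, two vertices being adjacent iff the corresponding segments have nonempty intersection. A graph is an IP-SEG graph if it is isomorphic to the intersection graph of some IP-SEG model. *)

From Stdlib Require Import Reals.
From mathcomp Require Import all_boot.
Set Implicit Arguments. Unset Strict Implicit. Unset Printing Implicit Defensive.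

Definition point := (R * R)%type.

Record segment := Seg { sa : point; sb : point }.

Definition on_segment (s : segment) (z : point) : Prop :=
  exists t : R, Rle R0 t /\ Rle t R1 /\
    fst z = Rplus (Rmult (Rminus R1 t) (fst (sa s))) (Rmult t (fst (sb s))) /\
    snd z = Rplus (Rmult (Rminus R1 t) (snd (sa s))) (Rmult t (snd (sb s))).

Definition seg_intersect (s1 s2 : segment) : Prop :=
  exists z : point, on_segment s1 z /\ on_segment s2 z.

Definition on_line (y : R) (p : point) : Prop := snd p = y.

Definition interval_segment (y1 y2 : R) (s : segment) : Prop :=
  sa s <> sb s /\
  ((on_line y1 (sa s) /\ on_line y1 (sb s)) \/ (on_line y2 (sa s) /\ on_line y2 (sb s))).

Definition permutation_segment (y1 y2 : R) (s : segment) : Prop :=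
  (on_line y1 (sa s) /\ on_line y2 (sb s)) \/ (on_line y2 (sa s) /\ on_line y1 (sb s)).

Definition ipseg_segment (y1 y2 : R) (s : segment) : Prop :=
  interval_segment y1 y2 s \/ permutation_segment y1 y2 s.

Definition graph (n : nat) := {ffun 'I_n * 'I_n -> bool}.

(* Indexing the model by the vertices is the isomorphism. *)
Definition ipseg_graph (n : nat) (g : graph n) : Prop :=
  (forall u : 'I_n, g (u, u) = false) /\
  exists (y1 y2 : R), y1 <> y2 /\
  exists f : 'I_n -> segment,
    (forall v, ipseg_segment y1 y2 (f v)) /\
    (forall u v : 'I_n, u <> v -> (g (u, v) = true <-> seg_intersect (f u) (f v))).

(* log n, rounded, plus one (so that it is >= 1 also for n <= 1). *)
Definition lg1 (n : nat) : nat := (trunc_log 2 n).+1.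

From Stdlib Require Import Reals Lra Psatz.
From mathcomp Require Import all_boot zify.
Set Implicit Arguments. Unset Strict Implicit. Unset Printing Implicit Defensive.

(* A segment of an IP-SEG model is described by a triple
   (kind, l, r): kind 0 or 1 for an interval segment on L1 or L2 covering the
   abscissae [l, r], kind 2 for a permutation segment joining (l, y1) to
   (r, y2).  Whether two segments meet depends only on the relative order of
   their coordinates: it is a fixed boolean formula [seg_adj] in the
   comparisons between l, r, l', r'.  Replacing each coordinate by its rank
   among the 2n endpoint abscissae of the model preserves all comparisons, so
   every IP-SEG graph is represented by labels in {0,1,2} x [0, 2^w) x [0, 2^w)
   with w = log n + 2 and a universal adjacency test on labels.
   The file proceeds as follows: the combinatorial adjacency test and its
   invariance under order-preserving maps; the geometric characterisation of
   intersections; the normalisation of a segment into a triple; ranks; the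
   construction of the labels; counting graphs with such labels; binary
   encoding of the labels.  The theorem (with c = 6) follows. *)

Definition represented (n : nat) (T : Type) (adj : T -> T -> bool) (g : graph n) :=
  (forall u, g (u, u) = false) /\
  exists lab : 'I_n -> T, forall u v, u <> v -> g (u, v) = adj (lab u) (lab v).

(* Few labels give few graphs: a represented graph is determined by its
   labelling, hence there are at most #|T|^n of them. *)
Lemma card_represented (n : nat) (T : finType) (adj : T -> T -> bool) :
  exists S : {set graph n}, #|S| <= #|T| ^ n /\
    forall g, represented adj g -> g \in S.
Proof.
pose graph_of (lab : {ffun 'I_n -> T}) : graph n :=
  [ffun uv => (uv.1 != uv.2) && adj (lab uv.1) (lab uv.2)].
exists (graph_of @: setT); split.
  by apply: leq_trans (leq_imset_card _ _) _; rewrite cardsT card_ffun card_ord.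
move=> g [loopless [lab Hlab]]; apply/imsetP; exists (finfun lab); first by rewrite inE.
apply/ffunP => -[u v]; rewrite !ffunE /=.
case: (eqVneq u v) => [->|neq_uv]; first by rewrite loopless.
by rewrite Hlab //; apply/eqP.
Qed.

Section Adjacency.
Variables (T : Type) (le : T -> T -> bool).

(* x lies in [l, r]; [l, r] and [l', r'] overlap; one of them contains the
   other (as pairs of L1- and L2-abscissae: the segments do not cross). *)
Definition btw (x l r : T) : bool := le l x && le x r.
Definition ovl (l r l' r' : T) : bool := le l r' && le l' r.
Definition nest (l r l' r' : T) : bool := (le l l' && le r' r) || (le l' l && le r r').

Definition seg_adj (k : nat) (l r : T) (k' : nat) (l' r' : T) : bool :=
  match k, k' with
  | 0, 0 | 1, 1 => ovl l r l' r'
  | 0, 1 | 1, 0 => false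
  | 0, _ => btw l' l r
  | 1, _ => btw r' l r
  | _, 0 => btw l l' r'
  | _, 1 => btw r l' r'
  | _, _ => nest l r l' r'
  end.
End Adjacency.

Lemma seg_adj_transfer (T1 T2 : Type) (le1 : T1 -> T1 -> bool) (le2 : T2 -> T2 -> bool)
  (h : T2 -> T1) (P : T2 -> Prop) k a b k' c d :
  (forall x y, P x -> P y -> le1 (h x) (h y) = le2 x y) -> P a -> P b -> P c -> P d ->
  seg_adj le1 k (h a) (h b) k' (h c) (h d) = seg_adj le2 k a b k' c d.
Proof.
move=> hmono Pa Pb Pc Pd.
by case: k => [|[|k]]; case: k' => [|[|k']]; rewrite /= /btw /ovl /nest ?hmono.
Qed.

Section Geometry.
Local Open Scope R_scope.

Definition Rleb (a b : R) : bool := if Rle_dec a b then true else false.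

Lemma RlebP a b : reflect (a <= b) (Rleb a b).
Proof. by rewrite /Rleb; case: Rle_dec => H; constructor. Qed.

Lemma RlebAP a b c d : reflect (a <= b /\ c <= d) (Rleb a b && Rleb c d).
Proof. by apply: (iffP andP) => -[? ?]; split; apply/RlebP. Qed.

Lemma btwP x l r : reflect (l <= x <= r) (btw Rleb x l r).
Proof. exact: RlebAP. Qed.

Lemma ovlP l r l' r' : reflect (l <= r' /\ l' <= r) (ovl Rleb l r l' r').
Proof. exact: RlebAP. Qed.

Lemma nestP l r l' r' :
  reflect ((l <= l' /\ r' <= r) \/ (l' <= l /\ r <= r')) (nest Rleb l r l' r').
Proof.
by apply: (iffP orP) => -[h|h]; [left|right|left|right]; apply/RlebAP.
Qed.

Lemma convex_le a b x : a <= x <= b -> exists t, 0 <= t <= 1 /\ x = (1-t)*a + t*b.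
Proof.
move=> [ax xb]; case: (Req_dec a b) => [eq_ab|ne_ab].
  by subst; exists 0; split; lra.
exists ((x - a) / (b - a)); split; [split|].
- by apply: Rmult_le_pos; [lra|apply/Rlt_le/Rinv_0_lt_compat; lra].
- by apply: (Rmult_le_reg_r (b - a)); [|rewrite /Rdiv Rmult_assoc Rinv_l]; lra.
- by field; lra.
Qed.

Lemma convex a b x : Rmin a b <= x <= Rmax a b -> exists t, 0 <= t <= 1 /\ x = (1-t)*a + t*b.
Proof.
rewrite /Rmin /Rmax; case: Rle_dec => [ab|ba] hx; first exact: convex_le.
have [t [ht ->]] := @convex_le b a x ltac:(lra).
by exists (1 - t); split; [lra|ring].
Qed.

Definition meet (P Q : point -> Prop) : Prop := exists z, P z /\ Q z.

Lemma meetC P Q : meet P Q <-> meet Q P.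
Proof. by split=> -[z [? ?]]; exists z. Qed.

Lemma meet_iff P P' Q Q' : (forall z, P z <-> P' z) -> (forall z, Q z <-> Q' z) ->
  meet P Q <-> meet P' Q'.
Proof. by move=> PP' QQ'; split=> -[z [/PP' ? /QQ' ?]]; exists z. Qed.

Variables y1 y2 : R.
Hypothesis y1_neq_y2 : y1 <> y2.

Definition hseg (y l r : R) (z : point) : Prop := snd z = y /\ l <= fst z <= r.
Definition pseg (l r : R) (z : point) : Prop :=
  exists t, 0 <= t <= 1 /\ fst z = (1-t)*l + t*r /\ snd z = (1-t)*y1 + t*y2.

Definition desc (k : nat) (l r : R) : point -> Prop :=
  match k with 0%nat => hseg y1 l r | 1%nat => hseg y2 l r | _ => pseg l r end.

Lemma hseg_meet y l r l' r' : l <= r -> l' <= r' ->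
  meet (hseg y l r) (hseg y l' r') <-> l <= r' /\ l' <= r.
Proof.
move=> lr lr'; split=> [[z [[_ ?] [_ ?]]]|[? ?]]; first lra.
by exists (Rmax l l', y); rewrite /Rmax /hseg /=; case: Rle_dec => ?; repeat split; lra.
Qed.

Lemma hseg_disjoint l r l' r' : ~ meet (hseg y1 l r) (hseg y2 l' r').
Proof. by move=> [z [[? _] [? _]]]; apply: y1_neq_y2; congruence. Qed.

(* A permutation segment reaches L1 only at its first endpoint... *)
Lemma pseg_hseg1 l r l' r' : meet (pseg l r) (hseg y1 l' r') <-> l' <= l <= r'.
Proof.
split=> [[z [[t [ht [hx hy]]] [hy' hx']]]|hl].
  have t0 : t = 0 by nra.
  by subst t; lra.
by exists (l, y1); split; [exists 0; split; [lra|split; simpl; ring] | split].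
Qed.

(* ...and L2 only at its second endpoint. *)
Lemma pseg_hseg2 l r l' r' : meet (pseg l r) (hseg y2 l' r') <-> l' <= r <= r'.
Proof.
split=> [[z [[t [ht [hx hy]]] [hy' hx']]]|hr].
  have t1 : t = 1 by nra.
  by subst t; lra.
by exists (r, y2); split; [exists 1; split; [lra|split; simpl; ring] | split].
Qed.

Lemma gap_zero_nested l r l' r' t : 0 <= t <= 1 ->
  (1-t)*(l-l') + t*(r-r') = 0 -> (l <= l' /\ r' <= r) \/ (l' <= l /\ r <= r').
Proof.
move=> ht gap0.
case: (Rle_dec l l') => ?; case: (Rle_dec r' r) => ?; try by [left; split; lra | right; split; lra].
- case: (Req_dec l l') => [?|?]; first by right; split; lra.
  case: (Req_dec t 0) => [t0|?]; first by subst t; lra.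
  have : t*(r-r') < 0 by nra.
  have : (1-t)*(l-l') <= 0 by nra.
  lra.
- case: (Req_dec r r') => [?|?]; first by right; split; lra.
  case: (Req_dec t 1) => [t1|?]; first by subst t; lra.
  have : (1-t)*(l-l') > 0 by nra.
  have : t*(r-r') >= 0 by nra.
  lra.
Qed.

(* Two permutation segments meet iff their endpoints are not interleaved:
   at a common point both have the same parameter t, where their horizontal
   gap vanishes. *)
Lemma pseg_meet l r l' r' :
  meet (pseg l r) (pseg l' r') <-> (l <= l' /\ r' <= r) \/ (l' <= l /\ r <= r').
Proof.
split=> [[z [[t [ht [hx hy]]] [t' [ht' [hx' hy']]]]]|hnest].
  have tt' : t' = t by nra.
  subst t'; apply: (gap_zero_nested ht); nra.
have [t [ht gap0]] : exists t, 0 <= t <= 1 /\ 0 = (1-t)*(l-l') + t*(r-r').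
  by apply: convex; rewrite /Rmin /Rmax; case: Rle_dec => ?; lra.
by exists ((1-t)*l + t*r, (1-t)*y1 + t*y2); split; exists t; simpl; repeat split; nra.
Qed.

Lemma desc_meet k l r k' l' r' :
  ((k < 2)%N -> l <= r) -> ((k' < 2)%N -> l' <= r') ->
  meet (desc k l r) (desc k' l' r') <-> seg_adj Rleb k l r k' l' r'.
Proof.
move=> lr lr'.
case: k lr => [|[|k]] lr; case: k' lr' => [|[|k']] lr' /=.
- exact: iff_trans (hseg_meet _ (lr isT) (lr' isT)) (rwP (ovlP _ _ _ _)).
- by split=> // /hseg_disjoint.
- exact: iff_trans (meetC _ _) (iff_trans (pseg_hseg1 _ _ _ _) (rwP (btwP _ _ _))).
- by split=> // /meetC /hseg_disjoint.
- exact: iff_trans (hseg_meet _ (lr isT) (lr' isT)) (rwP (ovlP _ _ _ _)).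
- exact: iff_trans (meetC _ _) (iff_trans (pseg_hseg2 _ _ _ _) (rwP (btwP _ _ _))).
- exact: iff_trans (pseg_hseg1 _ _ _ _) (rwP (btwP _ _ _)).
- exact: iff_trans (pseg_hseg2 _ _ _ _) (rwP (btwP _ _ _)).
- exact: iff_trans (pseg_meet _ _ _ _) (rwP (nestP _ _ _ _)).
Qed.

Definition eqRb (a b : R) : bool := if Req_dec_T a b then true else false.

Lemma eqRb_refl a : eqRb a a = true.
Proof. by rewrite /eqRb; case: Req_dec_T. Qed.

Lemma eqRb_neq a b : a <> b -> eqRb a b = false.
Proof. by rewrite /eqRb; case: Req_dec_T. Qed.

Definition kind (s : segment) : nat :=
  if eqRb (snd (sa s)) y1 && eqRb (snd (sb s)) y1 then 0%nat
  else if eqRb (snd (sa s)) y2 && eqRb (snd (sb s)) y2 then 1%nat else 2%nat.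

Definition lft (s : segment) : R :=
  match kind s with
  | 0%nat | 1%nat => Rmin (fst (sa s)) (fst (sb s))
  | _ => if eqRb (snd (sa s)) y1 then fst (sa s) else fst (sb s) end.

Definition rgt (s : segment) : R :=
  match kind s with
  | 0%nat | 1%nat => Rmax (fst (sa s)) (fst (sb s))
  | _ => if eqRb (snd (sa s)) y1 then fst (sb s) else fst (sa s) end.

Lemma kind_lt3 s : (kind s < 3)%N.
Proof. by rewrite /kind; do 2 case: ifP => _ //. Qed.

Lemma lft_le_rgt s : (kind s < 2)%N -> lft s <= rgt s.
Proof.
by rewrite /lft /rgt; case: (kind s) => [|[|k]] //= _; rewrite /Rmin /Rmax;
  case: Rle_dec; lra.
Qed.

Lemma lft_endpoint s : lft s = fst (sa s) \/ lft s = fst (sb s).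
Proof.
by rewrite /lft; case: (kind s) => [|[|k]] /=; rewrite ?/Rmin;
  try case: Rle_dec; try case: eqRb; auto.
Qed.

Lemma rgt_endpoint s : rgt s = fst (sa s) \/ rgt s = fst (sb s).
Proof.
by rewrite /rgt; case: (kind s) => [|[|k]] /=; rewrite ?/Rmax;
  try case: Rle_dec; try case: eqRb; auto.
Qed.

Lemma on_horizontal a b y z :
  on_segment (Seg (a, y) (b, y)) z <-> hseg y (Rmin a b) (Rmax a b) z.
Proof.
rewrite /on_segment /hseg /=; split=> [[t [? [? [-> ->]]]]|[-> hx]].
  by split; [ring|rewrite /Rmin /Rmax; case: Rle_dec => ?; split; nra].
by have [t [ht ->]] := convex hx; exists t; repeat split; try lra; ring.
Qed.

Lemma seg_desc s z : ipseg_segment y1 y2 s ->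
  on_segment s z <-> desc (kind s) (lft s) (rgt s) z.
Proof.
have y2_neq_y1 : y2 <> y1 by auto.
case: s => [[ax ay] [bx by_]].
rewrite /ipseg_segment /interval_segment /permutation_segment /on_line /lft /rgt /kind /=.
move=> [[_ [[-> ->]|[-> ->]]]|[[-> ->]|[-> ->]]];
  rewrite ?eqRb_refl ?(eqRb_neq y1_neq_y2) ?(eqRb_neq y2_neq_y1) /=;
  try exact: on_horizontal; rewrite /on_segment /pseg /=.
- by split=> -[t ?]; exists t; intuition.
- by split=> -[t ?]; exists (1 - t); intuition lra.
Qed.

Lemma seg_intersect_adj s s' : ipseg_segment y1 y2 s -> ipseg_segment y1 y2 s' ->
  seg_intersect s s' <-> seg_adj Rleb (kind s) (lft s) (rgt s) (kind s') (lft s') (rgt s').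
Proof.
move=> hs hs'.
apply: iff_trans (desc_meet (@lft_le_rgt s) (@lft_le_rgt s')).
by apply: meet_iff => z; apply: seg_desc.
Qed.
End Geometry.

Section Rank.
Variables (T : finType) (coord : T -> R).

Definition rank (x : R) : nat := #|[set e | ~~ Rleb x (coord e)]|.

Lemma rank_mono e e' : (rank (coord e) <= rank (coord e'))%N = Rleb (coord e) (coord e').
Proof.
rewrite /rank; case: (RlebP (coord e) (coord e')) => H.
  apply: subset_leq_card; apply/subsetP => x; rewrite !inE.
  by case: (RlebP (coord e) (coord x)) => //= ? _; apply/negP => /RlebP; lra.
apply/negbTE; rewrite -ltnNge; apply: proper_card; apply/properP; split.
  apply/subsetP => x; rewrite !inE.
  by case: (RlebP (coord e') (coord x)) => //= ? _; apply/negP => /RlebP; lra.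
by exists e'; rewrite !inE; [apply/negP => /RlebP; lra | apply/negPn/RlebP; lra].
Qed.

Lemma rank_le x : (rank x <= #|T|)%N.
Proof. exact: max_card. Qed.
End Rank.

Definition code (w : nat) := ('I_3 * 'I_(2 ^ w) * 'I_(2 ^ w))%type.

Definition code_adj (w : nat) (x y : code w) : bool :=
  seg_adj leq x.1.1 x.1.2 x.2 y.1.1 y.1.2 y.2.

Definition width (n : nat) : nat := (lg1 n).+1.

Lemma width_rank_bound n : (#|{: 'I_n * bool}| < 2 ^ width n)%N.
Proof.
by rewrite card_prod card_ord card_bool /width /lg1 expnSr ltn_mul2r trunc_log_ltn.
Qed.

Lemma ipseg_represented n (g : graph n) :
  ipseg_graph g -> represented (@code_adj (width n)) g.
Proof.
move=> [loopless [y1 [y2 [y1_neq_y2 [f [f_ipseg f_model]]]]]]; split=> //.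
pose coord (e : 'I_n * bool) := if e.2 then fst (sa (f e.1)) else fst (sb (f e.1)).
have rank_lt x : (rank coord x < 2 ^ width n)%N.
  exact: leq_ltn_trans (rank_le coord x) (width_rank_bound n).
have is_coord v x : x = fst (sa (f v)) \/ x = fst (sb (f v)) -> exists e, x = coord e.
  by case=> ->; [exists (v, true) | exists (v, false)].
exists (fun v => (Ordinal (kind_lt3 y1 y2 (f v)),
                  Ordinal (rank_lt (lft y1 y2 (f v))),
                  Ordinal (rank_lt (rgt y1 y2 (f v))))).
move=> u v neq_uv; rewrite /code_adj /=.
rewrite (seg_adj_transfer (le2 := Rleb) (P := fun x => exists e, x = coord e)).
- (* adjacency in g = intersection of segments = adjacency of real triples *)
  have := f_model u v neq_uv; have := seg_intersect_adj y1_neq_y2 (f_ipseg u) (f_ipseg v).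
  by case: (g (u, v)); case: seg_adj; intuition.
- by move=> x y [e ->] [e' ->]; apply: rank_mono.
all: by apply: is_coord; first [apply: lft_endpoint | apply: rgt_endpoint].
Qed.

Lemma card_code_bound n : (#|{: code (width n)}| ^ n <= 2 ^ (6 * n * lg1 n))%N.
Proof.
rewrite !card_prod !card_ord.
apply: (@leq_trans ((2 ^ (2 + width n + width n)) ^ n)).
  case: n => [|n]; first by rewrite !expn0.
  by rewrite leq_exp2r // !expnD; apply: leq_mul => //; apply: leq_mul.
by rewrite -expnM leq_exp2l // /width /lg1; nia.
Qed.

Fixpoint enc (m k : nat) : seq bool :=
  if m is m'.+1 then odd k :: enc m' k./2 else [::].

Fixpoint dec (s : seq bool) : nat := if s is b :: s' then b + (dec s').*2 else 0.

Lemma size_enc m k : size (enc m k) = m.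
Proof. by elim: m k => //= m IH k; rewrite IH. Qed.

Lemma encK m k : k < 2 ^ m -> dec (enc m k) = k.
Proof.
elim: m k => [|m IH] k /=; first by rewrite expn0 ltnS leqn0 => /eqP->.
by move=> lt_k; rewrite IH ?odd_double_half // ltn_half_double -mul2n -expnS.
Qed.

(* A label as a bit string: 2 bits of kind, then the two ranks on w bits
   each.  The width w is recovered from the length, so decoding is uniform. *)
Definition bits (w : nat) (x : code w) : seq bool := enc 2 x.1.1 ++ enc w x.1.2 ++ enc w x.2.

Definition unbits (s : seq bool) : nat * nat * nat :=
  let w := (size s - 2)./2 in (dec (take 2 s), dec (take w (drop 2 s)), dec (drop (2 + w) s)).

Lemma size_bits w (x : code w) : size (bits x) = 2 + w + w.
Proof. by rewrite /bits !size_cat !size_enc addnA. Qed.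

Lemma unbits_enc w k p q : k < 2 ^ 2 -> p < 2 ^ w -> q < 2 ^ w ->
  unbits (enc 2 k ++ enc w p ++ enc w q) = (k, p, q).
Proof.
move=> lt_k lt_p lt_q.
rewrite /unbits !size_cat !size_enc addKn addnn doubleK.
rewrite -[2 + w]addnC -drop_drop !drop_size_cat ?size_enc //.
by rewrite !take_size_cat ?size_enc // !encK.

Qed.

Lemma bitsK w (x : code w) : unbits (bits x) = (x.1.1 : nat, x.1.2 : nat, x.2 : nat).
Proof. by apply: unbits_enc => //; apply: ltn_trans (ltn_ord _) _. Qed.

Definition bits_adj (s t : seq bool) : bool :=
  seg_adj leq (unbits s).1.1 (unbits s).1.2 (unbits s).2
              (unbits t).1.1 (unbits t).1.2 (unbits t).2.

Lemma bits_adjE w (x y : code w) : bits_adj (bits x) (bits y) = code_adj x y.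
Proof. by rewrite /bits_adj !bitsK. Qed.

Theorem mainTheorem2 :
  exists c : nat,
    (forall n : nat, exists S : {set graph n},
        #|S| <= 2 ^ (c * n * lg1 n) /\
        (forall g : graph n, ipseg_graph g -> g \in S)) /\
    (exists D : seq bool -> seq bool -> bool,
      forall (n : nat) (g : graph n), ipseg_graph g ->
        exists lab : 'I_n -> seq bool,
          (forall v, size (lab v) <= c * lg1 n) /\
          (forall u v : 'I_n, u <> v -> g (u, v) = D (lab u) (lab v))).
Proof.
exists 6; split.
- move=> n; have [S [cardS memS]] := card_represented n (@code_adj (width n)).
  exists S; split; last by move=> g /ipseg_represented /memS.
  exact: leq_trans cardS (card_code_bound n).
- exists bits_adj => n g /ipseg_represented [_ [lab lab_adj]].
  exists (fun v => bits (lab v)); split.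
  + by move=> v; rewrite size_bits /width /lg1; lia.
  + by move=> u v neq_uv; rewrite lab_adj // bits_adjE.
Qed.
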